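(* Let $\mathcal{O}$ be a shuffle operad with monomial relations generated by unary operations, i.e. an associative algebra $\mathbb{k}\langle x_1,\dots,x_n\rangle/(\mathcal{G})$ with $\mathcal{G}$ a set of monomials (words); tree monomials are words and divisors are occurrences of subwords. Number the divisors of a word $T$ that are relations (occurrences of elements of $\mathcal{G}$) according to the position of their first letter; this is an Anick numbering. For this numbering, the basis elements $v=T\otimes S_{i_1}\wedge\cdots\wedge S_{i_q}$ of $(\mathcal{A}_\mathcal{G})^{ab}_T$ satisfying conditions (I) and (II) below are precisely the elements $m\otimes S_1\wedge\cdots\wedge S_q$ where $m$ is an Anick $q$-chain and $S_1,\dots,S_q$ are the relations linked to form it (for $q=0$, the generators $x_i\otimes 1$): (I) for each $S_j$ present in $v$, $\partial_j(v)$ is decomposable; (II) for each $S_j$ not present in $v$, there exists $i<j$ with $\partial_i(v\wedge S_j)$ indecomposable.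
   Context: For a word $T$ with relation occurrences $S_1,\dots,S_p$, consider elements $T\otimes S_{i_1}\wedge\cdots\wedge S_{i_q}$ of $\mathbb{k}T\otimes\Lambda(S_1,\dots,S_p)$ (exterior algebra, $S_i$ of degree $1$) with degree $-1$ derivations $\partial_i$, $\partial_i(S_j)=\delta_{ij}$. Such an element is indecomposable if every pair of consecutive letters of $T$ lies inside (and not as the last/first letter boundary of) at least one of $S_{i_1},\dots,S_{i_q}$, i.e. every edge between two consecutive letters of $T$ is an internal edge of one of these occurrences; otherwise it is decomposable. $(\mathcal{A}_\mathcal{G})^{ab}_T$ has as basis the indecomposable such elements. An Anick numbering is a numbering of the relation occurrences such that $i<j<k$ and $S_i\cap S_j\ne\varnothing$ imply $S_i\cap S_k\subset S_j\cap S_k$. Anick chains and their tails are defined inductively: each generator $x_i$ is a $0$-chain equal to its tail; a $q$-chain ($q\ge1$) is a monomial $m=nst$, where $t$ is its tail, $ns$ is a $(q-1)$-chain with tail $s$, and $st$ has exactly one divisor which is a relation from $\mathcal{G}$, this divisor being a right divisor (suffix) of $st$. The relations linked in $m$ are the occurrences of relations created at each step of this inductive construction. *)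

From mathcomp Require Import all_boot.
Set Implicit Arguments. Unset Strict Implicit. Unset Printing Implicit Defensive.

(* An occurrence (divisor) of a subword in a word T is a pair (p, l):
   the subword of T starting at position p (0-based) of length l. *)
Definition occ := (nat * nat)%type.

Section Words.
Variable n : nat.
Notation word := (seq 'I_n).
Variable G : pred word.

Definition subw (T : word) (o : occ) : word := take o.2 (drop o.1 T).

(* The numbering S_1, S_2, ... of the relation
   occurrences of T is the order of this list (index 0 = S_1). *)
Definition occs (T : word) : seq occ :=
  [seq o <- [seq (p, l) | p <- iota 0 (size T), l <- iota 1 (size T - p)]
   | G (subw T o)].

Definition opos (o : occ) : pred nat := fun k => (o.1 <= k) && (k < o.1 + o.2).

(* T (x) /\ J is indecomposable: every edge k (between letters k and k+1)
   is an internal edge of some occurrence of J. *)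
Definition indecomposable (T : word) (J : seq occ) : bool :=
  all (fun k => has (fun o => (o.1 <= k) && (k.+1 < o.1 + o.2)) J)
      (iota 0 (size T).-1).

(* condition (I): for each S_j present, d_j(v) (= +- T (x) /\ (J \ S_j)) is
   decomposable *)
Definition condI (T : word) (J : seq occ) : bool :=
  all (fun o => ~~ indecomposable T (rem o J)) J.

(* condition (II): for each S_j of T not present in v, there is i < j with
   S_i present in v /\ S_j, and d_i(v /\ S_j) (= +- T (x) /\ ((J u S_j) \ S_i))
   indecomposable *)
Definition condII (T : word) (J : seq occ) : bool :=
  all (fun o => (o \notin J) ==>
        has (fun o' => (index o' (occs T) < index o (occs T))
                       && indecomposable T (rem o' (o :: J))) J)
      (occs T).

(* Anick chains: anick_chain q m t L means m is an Anick q-chain with tail t,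
   and L is the list of linked relation occurrences (as occurrences in m). *)
Inductive anick_chain : nat -> word -> word -> seq occ -> Prop :=
| anick0 (x : 'I_n) : anick_chain 0 [:: x] [:: x] [::]
| anickS q (w s t : word) (L : seq occ) (o : occ) :
    anick_chain q (w ++ s) s L ->
    occs (s ++ t) = [:: o] ->
    o.1 + o.2 = size (s ++ t) ->
    (* and it is not a divisor of t alone (it starts inside s) *)
    o.1 < size s ->
    anick_chain q.+1 (w ++ s ++ t) t (rcons L (size w + o.1, o.2)).

Definition anick_numbering (T : word) (num : seq occ) : Prop :=
  forall i j k, i < j -> j < k -> k < size num ->
    (exists p, opos (nth (0,0) num i) p && opos (nth (0,0) num j) p) ->
    forall p, opos (nth (0,0) num i) p -> opos (nth (0,0) num k) p ->
              opos (nth (0,0) num j) p.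

End Words.

From mathcomp Require Import all_boot zify.
Set Implicit Arguments. Unset Strict Implicit. Unset Printing Implicit Defensive.

(* Since no relation divides another, two relation occurrences of a word starting at the
   same letter coincide, and one starting later also ends later.  Hence the numbering by
   first letter is an Anick numbering, and the relations S_1, ..., S_q of a basis element,
   sorted by first letter, are intervals increasing at both ends.
   For such a family, indecomposability says that S_1 starts at the first letter, S_q ends
   at the last one and consecutive S_i overlap.  Condition (I) then says that S_i and
   S_(i+2) are disjoint, because the edge leaving S_i is covered by S_(i+1) alone.  Given
   this, condition (II) says that no relation other than S_j lies between the end of
   S_(j-2) and the end of S_j: such a relation would straddle S_(j-1) and could replace it,
   while conversely a relation replacing some S_i would have to cover the edge leaving
   S_(i-1).  By induction on the chain, adding or removing the last link, these are exactly
   the families of relations linked in Anick chains. *)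

Lemma incr_ltn (f : nat -> nat) m : (forall i, i.+1 < m -> f i < f i.+1) ->
  forall i j, i < j -> j < m -> f i < f j.
Proof.
move=> f_incr i j ij jm; have im : i < m := ltn_trans ij jm.
apply: (@homo_ltn_in _ [pred k | k < m] f (fun a b => a < b)) => //.
- exact: ltn_trans.
- by move=> a b _ /= bm k /andP[_ kb]; exact: ltn_trans kb bm.
- by move=> k _ /= /f_incr.
Qed.

Lemma incr_leq (f : nat -> nat) m : (forall i, i.+1 < m -> f i < f i.+1) ->
  forall i j, i <= j -> j < m -> f i <= f j.
Proof.
move=> f_incr i j; rewrite leq_eqVlt => /predU1P[-> //|ij jm].
exact/ltnW/(incr_ltn f_incr).
Qed.

Lemma exists_crossing (f : nat -> nat) c m : f 0 < c -> c <= f m ->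
  exists2 i, i < m & f i < c <= f i.+1.
Proof.
elim: m => [|m IHm] f0c cfm; first by lia.
have [cfm'|fmc] := leqP c (f m); last by exists m => //; apply/andP.
by have [i im ci] := IHm f0c cfm'; exists i => //; lia.
Qed.

Lemma drop_take_cat (T : Type) (s : seq T) p k : p <= k -> k <= size s ->
  drop p (take k s) ++ drop k s = drop p s.
Proof.
move=> pk ks; rewrite -{3}(cat_take_drop k s) drop_cat size_takel //.
case: ltnP => kp //; have -> : p = k by apply/eqP; rewrite eqn_leq pk.
by rewrite subnn drop0 drop_oversize ?size_takel.
Qed.

Lemma subw_infix n (T : seq 'I_n) (o o' : occ) :
  o'.1 <= o.1 -> o.1 + o.2 <= o'.1 + o'.2 -> infix (subw T o) (subw T o').
Proof.
move=> le1 le2; apply/infixP; rewrite /subw.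
set X := drop o'.1 T; set a := o.1 - o'.1.
have -> : drop o.1 T = drop a X by rewrite /X drop_drop; congr drop; lia.
have -> : o'.2 = (a + o.2) + (o'.2 - (a + o.2)) by lia.
rewrite takeD takeD -catA.
by exists (take a X), (take (o'.2 - (a + o.2)) (drop (a + o.2) X)).
Qed.

Lemma uniq_seq1 (T : eqType) (s : seq T) x :
  uniq s -> x \in s -> {in s, forall y, y = x} -> s = [:: x].
Proof.
case: s => [|a [|b s]] //= => [_ | /andP[ab _] _ s_x]; first by rewrite inE => /eqP ->.
have ax : a = x by apply: s_x; rewrite mem_head.
have bx : b = x by apply: s_x; rewrite !inE eqxx orbT.
by move: ab; rewrite ax bx mem_head.
Qed.

Lemma perm_rem (T : eqType) (x : T) (s t : seq T) :
  perm_eq s t -> perm_eq (rem x s) (rem x t).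
Proof.
move=> st; apply/permP => P.
by rewrite !count_rem (permP st) (perm_mem st).
Qed.

Definition ltn_lex (x y : occ) := (x.1 < y.1) || ((x.1 == y.1) && (x.2 < y.2)).

Lemma occ_grid_pairwise_lex N m k :
  pairwise ltn_lex [seq ((p, l) : occ) | p <- iota m k, l <- iota 1 (N - p)].
Proof.
elim: k m => [|k IHk] m //=.
rewrite pairwise_cat IHk andbT; apply/andP; split.
  apply/allrelP => x y /mapP[a _ ->] /allpairsPdep[p [l [p_in _ ->]]].
  by move: p_in; rewrite mem_iota /ltn_lex /= => /andP[-> _].
rewrite pairwise_map -sorted_pairwise; last by move=> ???; rewrite /relpre /ltn_lex /= !eqxx /=; lia.
by apply: sub_sorted (iota_ltn_sorted 1 _) => a b; rewrite /relpre /ltn_lex /= eqxx /=; lia.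
Qed.

Section Occurrences.

Variables (n : nat) (G : pred (seq 'I_n)).
Notation word := (seq 'I_n).

Lemma mem_occs (T : word) (o : occ) :
  (o \in occs G T) = [&& 0 < o.2, o.1 + o.2 <= size T & G (subw T o)].
Proof.
rewrite /occs mem_filter andbC; case: (G _) => /=; last by rewrite !andbF.
rewrite andbT; case: o => p l /=.
apply/allpairsPdep/andP => [[x [y [Hx Hy [-> ->]]]] | [l0 pl]].
  by move: Hx Hy; rewrite !mem_iota; lia.
by exists p, l; rewrite !mem_iota; split => //; lia.
Qed.

Lemma occs_fit (T : word) (o : occ) : o \in occs G T -> o.1 + o.2 <= size T.
Proof. by rewrite mem_occs => /and3P[]. Qed.

Lemma size_subw (T : word) (o : occ) : o.1 + o.2 <= size T -> size (subw T o) = o.2.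
Proof. by move=> fits; rewrite /subw size_takel // size_drop; lia. Qed.

Lemma mem_occs_shift (u v x : word) p l : p + l <= size v ->
  ((size u + p, l) \in occs G (u ++ v ++ x)) = ((p, l) \in occs G v).
Proof.
move=> fits; rewrite !mem_occs /=.
have [->|l0] //= := posnP l.
have -> : subw (u ++ v ++ x) (size u + p, l) = subw v (p, l).
  rewrite /subw /= addnC -drop_drop drop_size_cat // drop_cat ifT; last by lia.
  by rewrite takel_cat // size_drop; lia.
by rewrite !size_cat fits; congr andb; apply/idP; lia.
Qed.

Lemma mem_occs_catr (v x : word) (o : occ) : o.1 + o.2 <= size v ->
  (o \in occs G (v ++ x)) = (o \in occs G v).
Proof. by case: o => p l fits; have := @mem_occs_shift [::] v x p l fits. Qed.

Lemma occs_catr (v x : word) : {subset occs G v <= occs G (v ++ x)}.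
Proof. by move=> o o_v; rewrite mem_occs_catr //; move: o_v; rewrite mem_occs => /and3P[]. Qed.

Lemma mem_occs_drop (T : word) k p l : k <= size T ->
  ((k + p, l) \in occs G T) = ((p, l) \in occs G (drop k T)).
Proof.
move=> kT; have [fits|long] := leqP (p + l) (size (drop k T)).
  have := @mem_occs_shift (take k T) (drop k T) [::] p l fits.
  by rewrite cats0 cat_take_drop size_takel.
rewrite size_drop in long.
by apply/idP/idP; rewrite mem_occs => /and3P[_ fits _]; move: fits; rewrite ?size_drop /=; lia.
Qed.

Lemma occs_pairwise_lex (T : word) : pairwise ltn_lex (occs G T).
Proof. exact/pairwise_filter/occ_grid_pairwise_lex. Qed.

Lemma occs_uniq (T : word) : uniq (occs G T).
Proof. by apply: pairwise_uniq (occs_pairwise_lex T) => x; rewrite /ltn_lex !ltnn andbF. Qed.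

Hypothesis G_long : forall u, G u -> 1 < size u.
Hypothesis G_reduced : forall u v, G u -> G v -> infix u v -> u = v.

Lemma occs_bounds (T : word) (o : occ) :
  o \in occs G T -> 1 < o.2 /\ o.1 + o.2 <= size T.
Proof.
move=> o_T; split; last exact: occs_fit o_T.
by move: o_T; rewrite mem_occs => /and3P[_ fits /G_long]; rewrite size_subw.
Qed.

Lemma occs_eq_of_sub (T : word) (o o' : occ) : o \in occs G T -> o' \in occs G T ->
  o'.1 <= o.1 -> o.1 + o.2 <= o'.1 + o'.2 -> o = o'.
Proof.
move=> o_T o'_T le1 le2.
have [_ fits] := occs_bounds o_T; have [_ fits'] := occs_bounds o'_T.
move: o_T o'_T; rewrite !mem_occs => /and3P[_ _ Go] /and3P[_ _ Go'].
have := congr1 size (G_reduced Go Go' (subw_infix T le1 le2)).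
rewrite !size_subw //; case: o o' le1 le2 {Go Go' fits fits'} => [p l] [p' l'] /=.
by move=> *; congr pair; lia.
Qed.

Lemma occs_eq_of_start (T : word) (o o' : occ) :
  o \in occs G T -> o' \in occs G T -> o.1 = o'.1 -> o = o'.
Proof.
move=> o_T o'_T eq1; have [le2|lt2] := leqP (o.1 + o.2) (o'.1 + o'.2).
  by apply: occs_eq_of_sub o_T o'_T _ le2; rewrite eq1.
by apply/esym/(occs_eq_of_sub o'_T o_T); [rewrite eq1 | exact: ltnW].
Qed.

Lemma occs_end_lt (T : word) (o o' : occ) : o \in occs G T -> o' \in occs G T ->
  o.1 < o'.1 -> o.1 + o.2 < o'.1 + o'.2.
Proof.
move=> o_T o'_T lt1; rewrite ltnNge; apply/negP => le2.
have eq_o := occs_eq_of_sub o'_T o_T (ltnW lt1) le2.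
by move: lt1; rewrite eq_o ltnn.
Qed.

Lemma occs_pairwise (T : word) : pairwise (fun x y : occ => x.1 < y.1) (occs G T).
Proof.
apply: (@sub_in_pairwise _ (mem (occs G T)) ltn_lex); last exact: occs_pairwise_lex.
  move=> x y x_T y_T /orP[//|/andP[/eqP eq1 lt2]].
  by move: lt2; rewrite (occs_eq_of_start x_T y_T eq1) ltnn.
exact/allP.
Qed.

Lemma index_occs_lt (T : word) (o o' : occ) : o \in occs G T -> o' \in occs G T ->
  (index o (occs G T) < index o' (occs G T)) = (o.1 < o'.1).
Proof.
move=> o_T o'_T; have /(pairwiseP (0,0)) sorted_T := occs_pairwise T.
rewrite -!index_mem in o_T o'_T.
have [lt|gt|eq] := ltngtP (index o (occs G T)) (index o' (occs G T)).
- by have := sorted_T _ _ o_T o'_T lt; rewrite !nth_index // -index_mem.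
- have := sorted_T _ _ o'_T o_T gt; rewrite !nth_index -?index_mem //.
  by move/ltnW; rewrite leqNgt => /negbTE.
- have := congr1 (nth (0,0) (occs G T)) eq; rewrite !nth_index -?index_mem //.
  by move=> ->; rewrite ltnn.
Qed.

Lemma occs_anick_numbering (T : word) : anick_numbering T (occs G T).
Proof.
move=> i j k ij jk kT _ p.
have /(pairwiseP (0,0)) sorted_T := occs_pairwise T.
have jT : j < size (occs G T) := ltn_trans jk kT.
have iT : i < size (occs G T) := ltn_trans ij jT.
have ends := occs_end_lt (mem_nth (0,0) iT) (mem_nth (0,0) jT) (sorted_T _ _ iT jT ij).
move: (sorted_T _ _ jT kT jk) (sorted_T _ _ iT jT ij) ends; rewrite /opos.
case: (nth _ _ i) => a1 b1; case: (nth _ _ j) => a2 b2; case: (nth _ _ k) => a3 b3 /=.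
by move=> *; apply/andP; lia.
Qed.

End Occurrences.

Definition ostart (L : seq occ) i := (nth (0,0) L i).1.
Definition oend (L : seq occ) i := (nth (0,0) L i).1 + (nth (0,0) L i).2.
Definition covers (o : occ) k := (o.1 <= k) && (k.+1 < o.1 + o.2).

(* In a chain whose relations are linked along L, the tail of the j-chain starts at
   [window_start L j], and the next link must be the only relation occurrence between
   this position and its own end. *)
Definition window_start (L : seq occ) j := if j is j'.+2 then oend L j' else j.

Definition anick_links n (G : pred (seq 'I_n)) (T : seq 'I_n) (L : seq occ) : Prop :=
  [/\ {subset L <= occs G T},
      forall i, i.+1 < size L -> ostart L i < ostart L i.+1 < oend L i,
      forall i, i.+2 < size L -> oend L i <= ostart L i.+2 &
      if size L is 0 then size T = 1 else ostart L 0 = 0 /\ oend L (size L).-1 = size T].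

Definition isolated_links n (G : pred (seq 'I_n)) (T : seq 'I_n) (L : seq occ) : Prop :=
  forall j (S : occ), j < size L -> S \in occs G T -> window_start L j <= S.1 ->
    S.1 + S.2 <= oend L j -> S = nth (0,0) L j.

Lemma coverP n (T : seq 'I_n) (J : seq occ) :
  reflect (forall k, k.+1 < size T -> exists2 o, o \in J & covers o k) (indecomposable T J).
Proof.
apply: (iffP allP) => [cov k kT | cov k].
  have /hasP[o oJ ok] := cov k ltac:(rewrite mem_iota; lia).
  by exists o.
rewrite mem_iota => kT; have [o oJ ok] := cov k ltac:(lia).
by apply/hasP; exists o.
Qed.

Lemma perm_indecomposable n (T : seq 'I_n) (J J' : seq occ) :
  perm_eq J J' -> indecomposable T J = indecomposable T J'.
Proof. by move=> JJ'; apply: eq_all => k; apply: perm_has. Qed.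

Lemma perm_conditions n (G : pred (seq 'I_n)) (T : seq 'I_n) (J J' : seq occ) :
  perm_eq J J' ->
  [&& indecomposable T J, condI T J & condII G T J] =
  [&& indecomposable T J', condI T J' & condII G T J'].
Proof.
move=> JJ'; rewrite (perm_indecomposable T JJ') /condI /condII (perm_all _ JJ').
congr [&& _, _ & _].
  by apply: eq_all => o; rewrite (perm_indecomposable T (perm_rem o JJ')).
apply: eq_all => o; rewrite (perm_mem JJ') (perm_has _ JJ'); congr (_ ==> _).
apply: eq_has => o'; congr (_ && _); apply: perm_indecomposable.
by apply: perm_rem; rewrite perm_cons.
Qed.

Lemma covers_range (L : seq occ) :
  (forall i, i.+1 < size L -> ostart L i.+1 < oend L i) ->
  forall j1 j2 k, j1 <= j2 -> j2 < size L -> ostart L j1 <= k -> k.+2 <= oend L j2 ->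
  exists2 i, j1 <= i <= j2 & covers (nth (0,0) L i) k.
Proof.
move=> overlap j1; elim=> [|j2 IHj] k j12 j2L j1k kj2.
  exists 0; first by rewrite j12.
  by move: j12 j1k kj2; rewrite leqn0 => /eqP-> ; rewrite /covers /ostart /oend => *; apply/andP.
case: (boolP ((j1 <= j2) && (k.+2 <= oend L j2))) => [/andP[j12' kj] | far].
  have [i /andP[j1i ij2] cov] := IHj k j12' (ltnW j2L) j1k kj.
  by exists i; rewrite ?j1i ?(leq_trans ij2).
exists j2.+1; first by rewrite j12 leqnn.
apply/andP; split => //; move: far; rewrite negb_and -!ltnNge => /orP[j21|kj].
  by have <- : j1 = j2.+1 by apply/eqP; rewrite eqn_leq j12.
by have := overlap j2 j2L; move: kj; rewrite /ostart /oend; lia.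
Qed.

(* The edge between the last letter of link [j-1] and the next letter (the first edge if
   [j = 0]); edge [k] joins the letters at positions [k] and [k+1]. *)
Definition private_edge (L : seq occ) j := if j is i.+1 then (oend L i).-1 else 0.

Section Links.

Variables (n : nat) (G : pred (seq 'I_n)).
Hypothesis G_long : forall u, G u -> 1 < size u.
Hypothesis G_reduced : forall u v, G u -> G v -> infix u v -> u = v.

Variables (T : seq 'I_n) (L : seq occ).
Hypothesis L_occs : {subset L <= occs G T}.
Hypothesis L_incr : forall i, i.+1 < size L -> ostart L i < ostart L i.+1.
Hypothesis L_overlap : forall i, i.+1 < size L -> ostart L i.+1 < oend L i.
Hypothesis L_gap : forall i, i.+2 < size L -> oend L i <= ostart L i.+2.

Local Notation link i := (nth (0,0) L i).

Lemma link_bounds i : i < size L -> ostart L i + 2 <= oend L i /\ oend L i <= size T.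
Proof.
move=> iL; have := occs_bounds G_long (L_occs (mem_nth (0,0) iL)).
by rewrite /ostart /oend; case: (link i) => a b /=; lia.
Qed.

Lemma occ_link_order (S : occ) i : S \in occs G T -> i < size L ->
  [/\ S.1 < ostart L i -> S.1 + S.2 < oend L i,
      ostart L i < S.1 -> oend L i < S.1 + S.2 &
      S.1 = ostart L i -> S = link i].
Proof.
move=> S_T iL; have iT := L_occs (mem_nth (0,0) iL).
by split=> h; [exact (occs_end_lt G_long G_reduced S_T iT h)
             | exact (occs_end_lt G_long G_reduced iT S_T h)
             | exact (occs_eq_of_start G_long G_reduced S_T iT h)].
Qed.

Lemma oend_incr i : i.+1 < size L -> oend L i < oend L i.+1.
Proof.
move=> iL; have [lt _ _] := occ_link_order (L_occs (mem_nth (0,0) (ltnW iL))) iL.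
exact: lt (L_incr iL).
Qed.

Lemma rem_link_cons (S : occ) i : S \notin L -> i < size L ->
  rem (link i) (S :: L) = S :: rem (link i) L.
Proof. by move=> SnL iL; rewrite /= ifN //; apply: contraNneq SnL => ->; exact: mem_nth. Qed.

Lemma notin_links_between (S : occ) j : j.+1 < size L ->
  ostart L j < S.1 < ostart L j.+1 -> S \notin L.
Proof.
move=> jL /andP[lo hi]; apply/negP => /(nthP (0,0))[l lL Sl].
have Sl1 : S.1 = ostart L l by rewrite -Sl.
have [lj|jl] := leqP l j.
  by have := incr_leq L_incr lj (ltnW jL); lia.
by have := incr_leq L_incr jl lL; lia.
Qed.

Lemma covers_first_edge l : l < size L -> covers (link l) 0 -> l = 0.
Proof.
case: l => // l lL /andP[st0 _].
by have := incr_ltn L_incr (ltn0Sn l) lL; rewrite /ostart; lia.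
Qed.

Lemma private_edgeP j : j < size L ->
  (private_edge L j).+1 < size T /\
  forall l, l < size L -> covers (link l) (private_edge L j) -> l = j.
Proof.
case: j => [|i] iL /=.
  by have [b b'] := link_bounds iL; split; [lia | exact: covers_first_edge].
have [_ b] := link_bounds iL; have [b' _] := link_bounds (ltnW iL).
have lt := oend_incr iL; split; first by lia.
move=> l lL /andP[cst cen]; case: (ltngtP l i.+1) => // [li | il].
  by have := incr_leq oend_incr (li : l <= i) (ltnW iL); move: cen; rewrite /oend; lia.
by have := incr_leq L_incr il lL; have := L_gap (leq_ltn_trans il lL); move: cst b'; rewrite /ostart; lia.
Qed.

Lemma indecomposable_links : indecomposable T L ->
  forall k, k.+1 < size T -> exists2 l, l < size L & ostart L l <= k /\ k.+1 < oend L l.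
Proof.
move=> /coverP cov k kT; have [_ /(nthP (0,0))[l lL <-] /andP[cst cen]] := cov k kT.
by exists l.
Qed.

Lemma indecomposable_ends : T != [::] -> indecomposable T L ->
  if size L is 0 then size T = 1 else ostart L 0 = 0 /\ oend L (size L).-1 = size T.
Proof.
move=> TnE indec; have cov := indecomposable_links indec.
case L0: (size L) => [|r] /=.
  have [T1|T2] := leqP (size T) 1; first by apply/eqP; rewrite eqn_leq T1 lt0n size_eq0.
  by have [l] := cov 0 T2; rewrite L0.
have rL : r < size L by rewrite L0.
have [b0 b0'] := link_bounds (leq_ltn_trans (leq0n r) rL); have [_ br] := link_bounds rL.
split.
  have [|l lL [cst _]] := cov 0; first by lia.
  by have := incr_leq L_incr (leq0n l) lL; lia.
have [|l lL [_ cen]] := cov (size T).-2; first by lia.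
have lr : l <= r by rewrite -ltnS -L0.
by have := incr_leq oend_incr lr rL; lia.
Qed.

Lemma indecomposable_overlap : indecomposable T L ->
  forall i, i.+1 < size L -> ostart L i.+1 < oend L i.
Proof.
move=> /indecomposable_links cov i iL; have [b1 b1'] := link_bounds iL.
have incr := L_incr iL; have [|l lL [cst cen]] := cov (ostart L i.+1).-1; first by lia.
have li : l <= i.
  by rewrite leqNgt; apply/negP => il; have := incr_leq L_incr il lL; lia.
by have := incr_leq oend_incr li (ltnW iL); lia.
Qed.

Section Spanning.

Hypothesis L_uniq : uniq L.
Hypothesis L_nonempty : 0 < size L.
Hypothesis L_first : ostart L 0 = 0.
Hypothesis L_last : oend L (size L).-1 = size T.

Lemma mem_rem_nth j l : j < size L -> l < size L -> (link l \in rem (link j) L) = (l != j).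
Proof. by move=> jL lL; rewrite mem_rem_uniq // inE /= nth_uniq // mem_nth ?andbT. Qed.

Lemma links_condI : condI T L.
Proof.
apply/allP => x /(nthP (0,0))[j jL <-]; apply/negP => /coverP cov.
have [eT only] := private_edgeP jL.
have [_ /[dup] /mem_rem /(nthP (0,0))[l lL <-]] := cov _ eT.
by rewrite mem_rem_nth // => /negP lj /(only l lL) /eqP.
Qed.

Lemma covered_before j k : j < size L -> k.+2 <= oend L j ->
  exists2 l, l <= j & covers (link l) k.
Proof.
move=> jL kj; have [|l /andP[_ lj] cov] := covers_range L_overlap (leq0n j) jL _ kj.
  by rewrite L_first.
by exists l.
Qed.

Lemma covered_after j k : j <= (size L).-1 -> ostart L j <= k -> k.+1 < size T ->
  exists2 l, j <= l < size L & covers (link l) k.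
Proof.
move=> jL jk kT; have lastL : (size L).-1 < size L by rewrite prednK.
have [|l /andP[jl lL] cov] := covers_range L_overlap jL lastL jk; first by rewrite L_last.
by exists l; rewrite ?jl ?(leq_ltn_trans lL).
Qed.

Lemma links_indecomposable : indecomposable T L.
Proof.
apply/coverP => k kT; have lastL : (size L).-1 < size L by rewrite prednK.
have [|l lL cov] := covered_before lastL (k := k); first by rewrite L_last.
by exists (link l) => //; apply/mem_nth/(leq_ltn_trans lL).
Qed.

Lemma straddling_link (S : occ) : isolated_links G T L -> S \in occs G T -> S \notin L ->
  exists i, [/\ 0 < i, i.+1 < size L, ostart L i < S.1 < oend L i.-1 & oend L i < S.1 + S.2].
Proof.
move=> iso S_T SnL; have [_ ST] := occs_bounds G_long S_T.
have neq i : i < size L -> S != link i.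
  by move=> iL; apply: contraNneq SnL => ->; exact: mem_nth.
have S0 : 0 < S.1.
  rewrite lt0n; apply: contraNneq (neq 0 L_nonempty) => S0.
  by have [_ _ ->] := occ_link_order S_T L_nonempty; rewrite // L_first.
have lastL : (size L).-1 < size L by rewrite prednK.
have Slast : S.1 <= ostart L (size L).-1.
  rewrite leqNgt; apply/negP => lt; have [_ gt _] := occ_link_order S_T lastL.
  by have := gt lt; rewrite L_last; lia.
have [|i ilast /andP[lo hi]] := exists_crossing (f := ostart L) (c := S.1) _ Slast.
  by rewrite L_first.
have iL : i.+1 < size L by lia.
have hi' : S.1 < ostart L i.+1.
  rewrite ltn_neqAle hi andbT; apply: contraNneq (neq _ iL) => eq1.
  by have [_ _ ->] := occ_link_order S_T iL.
have [endi _ _] := occ_link_order S_T iL; have [_ ende _] := occ_link_order S_T (ltnW iL).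
have win : S.1 < window_start L i.+1.
  rewrite ltnNge; apply: contraNN (neq _ iL) => w; apply/eqP.
  exact (iso _ _ iL S_T w (ltnW (endi hi'))).
case: i ilast lo hi hi' iL endi ende win => [|i] ilast lo hi hi' iL endi ende /= win.
  by lia.
by exists i.+1; split => //; [rewrite lo | exact: ende].
Qed.

Lemma links_condII : isolated_links G T L -> condII G T L.
Proof.
move=> iso; apply/allP => S S_T; apply/implyP => SnL.
have [i [i0 iL /andP[lo hi] ende]] := straddling_link iso S_T SnL.
have iT := L_occs (mem_nth (0,0) (ltnW iL)).
apply/hasP; exists (link i); first exact/mem_nth/ltnW.
rewrite (index_occs_lt G_long G_reduced iT S_T) lo andTb rem_link_cons //; last exact: ltnW.
apply/coverP => k kT; have [kb|kb] := leqP k.+2 (oend L i.-1).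
  have [|l li cov] := covered_before (j := i.-1) _ kb; first by lia.
  by exists (link l) => //; rewrite inE mem_rem_nth ?orbT //; lia.
have [ka|ka] := leqP (ostart L i.+1) k.
  have [|l /andP[il lL] cov] := covered_after (j := i.+1) _ ka kT; first by lia.
  by exists (link l) => //; rewrite inE mem_rem_nth ?orbT //; lia.
exists S; first exact: mem_head.
move: lo hi ende kb ka (L_overlap iL); rewrite /covers /ostart /oend => *; apply/andP; lia.
Qed.

Lemma condI_gap : condI T L -> forall i, i.+2 < size L -> oend L i <= ostart L i.+2.
Proof.
move=> HI i iL; rewrite leqNgt; apply/negP => over.
have mid : link i.+1 \in L by exact/mem_nth/ltnW.
move/allP: HI => /(_ _ mid); apply/negP; rewrite negbK; apply/coverP => k kT.
have [kb|kb] := leqP k.+2 (oend L i).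
  have [|l li cov] := covered_before (j := i) _ kb; first by lia.
  by exists (link l) => //; rewrite mem_rem_nth //; lia.
have [||l /andP[il lL] cov] := covered_after (j := i.+2) _ _ kT; [lia | lia |].
by exists (link l) => //; rewrite mem_rem_nth //; lia.
Qed.

Lemma condII_isolated : condII G T L -> isolated_links G T L.
Proof.
move=> HII j S jL S_T wS Sj; case: (eqVneq S (link j)) => // neq; exfalso.
have jT := L_occs (mem_nth (0,0) jL).
have cj : S.1 < ostart L j.
  rewrite ltnNge; apply: contra_neqN neq => le.
  exact (occs_eq_of_sub G_long G_reduced S_T jT le Sj).
case: j jL wS {Sj neq jT} cj => [|j] jL wS cj; first by move: cj; rewrite L_first.
have bj : ostart L j < S.1.
  case: j jL wS {cj} => [|j] jL /= wS; first by rewrite L_first.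
  by have := L_overlap (ltnW jL); lia.
have SnL : S \notin L by apply: (notin_links_between jL); rewrite bj cj.
move/allP: HII => /(_ S S_T); rewrite SnL implyTb => /hasP[_ /(nthP (0,0))[i iL <-]].
rewrite (index_occs_lt G_long G_reduced (L_occs (mem_nth _ iL)) S_T) => /andP[lo indec].
(* restated with [ostart], since [lia] does not identify the two forms of the projection *)
have {}lo : ostart L i < S.1 := lo.
have ij : i <= j.
  by rewrite leqNgt; apply/negP => ji; have := incr_leq L_incr ji iL; lia.
have [eT only] := private_edgeP iL.
move/coverP: indec => /(_ _ eT)[y]; rewrite rem_link_cons // inE.
case/orP => [/eqP-> {y}|/[dup] /mem_rem /(nthP (0,0))[l lL <-]]; last first.
  by rewrite mem_rem_nth // => /negP li /(only l lL) /eqP.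
case: i iL lo ij {eT only} => [|i] iL lo ij /andP[cst _]; rewrite /private_edge in cst.
  by lia.
case: j jL wS bj cj ij => [|j] jL /= wS bj cj ij; first by lia.
have := incr_leq oend_incr (ij : i <= j) (ltnW (ltnW jL)); have [b _] := link_bounds (ltnW iL).
by lia.
Qed.

End Spanning.

End Links.

Lemma anick_links_conditions n (G : pred (seq 'I_n)) (T : seq 'I_n) (L : seq occ) :
  (forall u, G u -> 1 < size u) -> (forall u v, G u -> G v -> infix u v -> u = v) ->
  uniq L -> anick_links G T L -> isolated_links G T L ->
  [&& indecomposable T L, condI T L & condII G T L].
Proof.
move=> G_long G_reduced L_uniq [L_occs L_chain L_gap L_ends] iso.
have L_incr i (iL : i.+1 < size L) : ostart L i < ostart L i.+1 by case/andP: (L_chain i iL).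
have L_overlap i (iL : i.+1 < size L) : ostart L i.+1 < oend L i by case/andP: (L_chain i iL).
case L0: (size L) L_ends => [|r] ends.
  rewrite (size0nil L0); apply/and3P; split => //; first by apply/coverP => k; rewrite ends.
  by apply/allP => S /(occs_bounds G_long); rewrite ends; lia.
have L_nonempty : 0 < size L by rewrite L0.
case: ends; rewrite -L0 => L_first L_last.
apply/and3P; split; first exact: (links_indecomposable L_overlap).
  exact: (links_condI G_long G_reduced L_occs L_incr L_gap).
exact: (links_condII G_long G_reduced L_occs L_overlap).
Qed.

Lemma conditions_anick_links n (G : pred (seq 'I_n)) (T : seq 'I_n) (L : seq occ) :
  (forall u, G u -> 1 < size u) -> (forall u v, G u -> G v -> infix u v -> u = v) ->
  T != [::] -> uniq L -> {subset L <= occs G T} ->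
  (forall i, i.+1 < size L -> ostart L i < ostart L i.+1) ->
  [&& indecomposable T L, condI T L & condII G T L] ->
  anick_links G T L /\ isolated_links G T L.
Proof.
move=> G_long G_reduced TnE L_uniq L_occs L_incr /and3P[indec HI HII].
have ends := indecomposable_ends G_long G_reduced L_occs L_incr TnE indec.
have L_overlap := indecomposable_overlap G_long G_reduced L_occs L_incr indec.
case L0: (size L) ends => [|r] ends.
  by split; [split; rewrite ?L0 | move=> j S; rewrite L0].
have L_nonempty : 0 < size L by rewrite L0.
move: (ends); rewrite -L0 => -[L_first L_last].
have L_gap := condI_gap L_overlap L_uniq L_nonempty L_first L_last HI.
split; last exact: (condII_isolated G_long G_reduced L_occs L_incr L_overlap L_gap).
split=> //; last by rewrite L0.
by move=> i iL; rewrite L_incr ?L_overlap.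
Qed.

Section Rcons.

Variables (L : seq occ) (o : occ).

Lemma ostart_rcons i : i < size L -> ostart (rcons L o) i = ostart L i.
Proof. by move=> iL; rewrite /ostart nth_rcons iL. Qed.

Lemma oend_rcons i : i < size L -> oend (rcons L o) i = oend L i.
Proof. by move=> iL; rewrite /oend nth_rcons iL. Qed.

Lemma nth_rcons_size : nth (0,0) (rcons L o) (size L) = o.
Proof. by rewrite nth_rcons ltnn eqxx. Qed.

Lemma ostart_rcons_size : ostart (rcons L o) (size L) = o.1.
Proof. by rewrite /ostart nth_rcons_size. Qed.

Lemma oend_rcons_size : oend (rcons L o) (size L) = o.1 + o.2.
Proof. by rewrite /oend nth_rcons_size. Qed.

Lemma window_start_rcons j : j <= size L -> window_start (rcons L o) j = window_start L j.
Proof. by case: j => [|[|j]] //= /ltnW jL; rewrite oend_rcons. Qed.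

End Rcons.

Lemma anick_links_tail n (G : pred (seq 'I_n)) (T : seq 'I_n) (L : seq occ) :
  anick_links G T L -> 0 < size L -> ostart L (size L).-1 < window_start L (size L).
Proof.
case: L => [|x [|y L]] // [_ L_chain _ ends] _; first by case: ends => /= ->.
by have /andP[_] := L_chain (size L) (ltnSn _).
Qed.

Lemma window_start_rcons_last n (G : pred (seq 'I_n)) (T : seq 'I_n) (L : seq occ) o :
  anick_links G T L -> window_start (rcons L o) (size L).+1 = size T.
Proof.
case: L => [|x L] [_ _ _ ends] //.
have -> : window_start (rcons (x :: L) o) (size (x :: L)).+1 = oend (rcons (x :: L) o) (size L).
  by [].
by rewrite oend_rcons //; case: ends.
Qed.

Section Extension.

Variables (n : nat) (G : pred (seq 'I_n)) (T0 t : seq 'I_n) (L : seq occ) (o : occ).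
Hypothesis L_links : anick_links G T0 L.
Local Notation p := (window_start L (size L)).
Hypothesis o_start : p <= o.1 < size T0.
Hypothesis o_end : o.1 + o.2 = size (T0 ++ t).
Hypothesis o_only : occs G (drop p (T0 ++ t)) = [:: (o.1 - p, o.2)].

Lemma mem_occs_tail (S : occ) : p <= S.1 ->
  (S \in occs G (T0 ++ t)) = ((S.1 - p, S.2) \in occs G (drop p (T0 ++ t))).
Proof.
move=> pS; rewrite -mem_occs_drop ?subnKC -?surjective_pairing //.
by case/andP: o_start; rewrite size_cat; lia.
Qed.

Lemma anick_links_rcons : anick_links G (T0 ++ t) (rcons L o).
Proof.
have [L_occs L_chain L_gap L_ends] := L_links.
have o_T : o \in occs G (T0 ++ t).
  by rewrite mem_occs_tail ?o_only ?mem_head //; case/andP: o_start.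
split.
- by move=> x; rewrite mem_rcons inE => /predU1P[-> // | /L_occs /occs_catr].
- move=> i; rewrite size_rcons ltnS leq_eqVlt => /predU1P[iL | iL]; last first.
    by rewrite !ostart_rcons ?oend_rcons ?(ltnW iL) //; exact: L_chain.
  have L0 : 0 < size L by rewrite -iL.
  have iL' : i < size L by rewrite -iL.
  rewrite ostart_rcons // oend_rcons // iL ostart_rcons_size.
  have tail := anick_links_tail L_links L0.
  have [_ last] : ostart L 0 = 0 /\ oend L (size L).-1 = size T0 by move: L_ends; rewrite -iL.
  rewrite -iL succnK in tail last; case/andP: o_start; rewrite -iL => *.
  by apply/andP; split; lia.
- move=> i; rewrite size_rcons ltnS leq_eqVlt => /predU1P[iL | iL]; last first.
    have iL' : i < size L by lia.
    by rewrite ostart_rcons // oend_rcons //; exact: L_gap.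
  have iL' : i < size L by rewrite -iL.
  by rewrite oend_rcons // iL ostart_rcons_size; case/andP: o_start; rewrite -iL.
- rewrite size_rcons /= oend_rcons_size o_end; split => //.
  case L0: (size L) L_ends => [|r] ends; last by rewrite ostart_rcons ?L0 //; case: ends.
  have -> : ostart (rcons L o) 0 = o.1 by rewrite -L0 ostart_rcons_size.
  by move: o_start; rewrite L0 ends; lia.
Qed.

Lemma isolated_links_rcons : isolated_links G T0 L -> isolated_links G (T0 ++ t) (rcons L o).
Proof.
move=> iso j S; rewrite size_rcons ltnS leq_eqVlt => /predU1P[-> | jL] S_T.
  rewrite window_start_rcons // oend_rcons_size nth_rcons_size => pS So.
  move: S_T; rewrite mem_occs_tail // o_only inE => /eqP [S1 S2].
  by case/andP: o_start => po _; apply: injective_projections => //; lia.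
have [L_occs _ _ _] := L_links.
rewrite window_start_rcons ?(ltnW jL) // oend_rcons // nth_rcons jL => wS Sj.
apply: iso => //; rewrite -(mem_occs_catr _ t) //.
by apply: leq_trans Sj _; exact/occs_fit/L_occs/mem_nth.
Qed.

End Extension.

Section Restriction.

Variables (n : nat) (G : pred (seq 'I_n)).
Hypothesis G_long : forall u, G u -> 1 < size u.
Hypothesis G_reduced : forall u v, G u -> G v -> infix u v -> u = v.
Variables (T : seq 'I_n) (L : seq occ) (o : occ).
Hypothesis Lo_links : anick_links G T (rcons L o).
Hypothesis Lo_iso : isolated_links G T (rcons L o).
Local Notation p := (window_start L (size L)).
Local Notation K := (window_start (rcons L o) (size L).+1).

Lemma rcons_occs : {subset rcons L o <= occs G T}.
Proof. by case: Lo_links. Qed.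

Lemma rcons_link_end : o.1 + o.2 = size T.
Proof. by case: Lo_links => _ _ _; rewrite size_rcons /= oend_rcons_size => -[]. Qed.

Lemma rcons_link_start : p <= o.1 < K.
Proof.
have [_ chain gap ends] := Lo_links; rewrite size_rcons in chain gap ends.
case: ends => first _; have o1 := ostart_rcons_size L o.
case L0: (size L) o1 => [|[|r]] o1 /=; first by rewrite -o1 first.
  have /andP[a b] := chain 0 ltac:(by rewrite L0).
  by rewrite first o1 in a b; apply/andP; split.
have /andP[_ b] := chain r.+1 ltac:(by rewrite L0).
have a := gap r ltac:(by rewrite L0); rewrite oend_rcons ?L0 // in a.
by rewrite o1 in a b; apply/andP; split.
Qed.

Lemma rcons_link_incr i : i.+1 < size (rcons L o) ->
  ostart (rcons L o) i < ostart (rcons L o) i.+1.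
Proof. by case: Lo_links => _ chain _ _ /chain /andP[]. Qed.

Lemma rcons_link_fits i : i < size L -> oend L i <= K.
Proof.
case L0: (size L) => [//|r] iL /=; rewrite oend_rcons ?L0 //.
have := incr_leq (oend_incr G_long G_reduced rcons_occs rcons_link_incr) (_ : i <= r).
by rewrite !oend_rcons ?L0 // size_rcons L0; apply.
Qed.

Lemma rcons_tail_size : K <= size T.
Proof.
have o_T : o \in occs G T by apply: rcons_occs; rewrite mem_rcons mem_head.
case L0: (size L) => [|r] /=.
  by move: o_T; rewrite mem_occs => /and3P[o2 oT _]; lia.
have Lr : nth (0,0) L r \in rcons L o by rewrite mem_rcons inE mem_nth ?orbT ?L0.
by rewrite oend_rcons ?L0 //; exact: (occs_fit (rcons_occs Lr)).
Qed.

Lemma anick_links_take : anick_links G (take K T) L.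
Proof.
have [_ chain gap ends] := Lo_links; rewrite size_rcons in chain gap.
have sK : size (take K T) = K by rewrite size_takel // rcons_tail_size.
split.
- move=> _ /(nthP (0,0))[i iL <-].
  have Li : nth (0,0) L i \in rcons L o by rewrite mem_rcons inE mem_nth ?orbT.
  rewrite -(mem_occs_catr _ (drop K T)) ?cat_take_drop ?rcons_occs // sK.
  exact: rcons_link_fits.
- move=> i iL; have := chain i (ltn_trans iL (ltnSn _)).
  by rewrite !ostart_rcons ?oend_rcons // ltnW.
- move=> i iL; have := gap i (ltn_trans iL (ltnSn _)).
  by rewrite ostart_rcons ?oend_rcons // (ltn_trans _ iL).
move: ends; rewrite sK size_rcons; case L0: (size L) => [|r] //= [first _].
by rewrite oend_rcons ?L0 //; rewrite ostart_rcons ?L0 in first.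
Qed.

Lemma isolated_links_take : isolated_links G (take K T) L.
Proof.
move=> j S jL S_T wS Sj.
have jLo : j < size (rcons L o) by rewrite size_rcons ltnW.
have S_T' := occs_catr (drop K T) S_T; rewrite cat_take_drop in S_T'.
have := Lo_iso jLo S_T'; rewrite nth_rcons jL.
by apply; rewrite ?window_start_rcons ?oend_rcons // ltnW.
Qed.

Lemma occs_tail : occs G (drop p T) = [:: (o.1 - p, o.2)].
Proof.
have o_T : o \in occs G T by apply: rcons_occs; rewrite mem_rcons mem_head.
have [po oK] := andP rcons_link_start; have pT : p <= size T by rewrite -rcons_link_end; lia.
apply: uniq_seq1 (occs_uniq _ _) _ _; first by rewrite -mem_occs_drop // subnKC // -surjective_pairing.
move=> [a b] ab; have := occs_fit ab; rewrite size_drop /= => fits.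
rewrite -mem_occs_drop // in ab.
have jLo : size L < size (rcons L o) by rewrite size_rcons.
have := Lo_iso jLo ab; rewrite window_start_rcons // oend_rcons_size nth_rcons_size.
rewrite rcons_link_end /= => /(_ (leq_addr _ _)) <- /=; first by rewrite addKn.
by lia.
Qed.

End Restriction.

Lemma anick_chain_links n (G : pred (seq 'I_n)) q (T t : seq 'I_n) (L : seq occ) :
  anick_chain G q T t L ->
  [/\ size L = q, anick_links G T L, isolated_links G T L & t = drop (window_start L (size L)) T].
Proof.
elim=> {q T t L} [x | q w s t L o _ [Lq L_links iso s_tail] o_only o_end o_start].
  by split => //; split.
have sw : size w = window_start L (size L).
  by have := congr1 size s_tail; rewrite size_drop size_cat; lia.
set o' := (size w + o.1, o.2).
have o'_start : window_start L (size L) <= o'.1 < size (w ++ s) by rewrite /= -sw size_cat; lia.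
have o'_end : o'.1 + o'.2 = size ((w ++ s) ++ t).
  by move: o_end; rewrite /= -catA !size_cat; lia.
have o'_only : occs G (drop (window_start L (size L)) ((w ++ s) ++ t)) =
               [:: (o'.1 - window_start L (size L), o'.2)].
  by rewrite -sw -catA drop_size_cat //= addKn -surjective_pairing.
rewrite catA; split; first by rewrite size_rcons Lq.
- exact: anick_links_rcons.
- exact: isolated_links_rcons.
by rewrite size_rcons (window_start_rcons_last _ L_links) drop_size_cat.
Qed.

Lemma links_anick_chain n (G : pred (seq 'I_n)) (T : seq 'I_n) (L : seq occ) :
  (forall u, G u -> 1 < size u) -> (forall u v, G u -> G v -> infix u v -> u = v) ->
  anick_links G T L -> isolated_links G T L ->
  anick_chain G (size L) T (drop (window_start L (size L)) T) L.
Proof.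
move=> G_long G_reduced; elim/last_ind: L T => [|L o IHL] T.
  by move=> [_ _ _ T1] _; case: T T1 => [|x []] // _; exact: anick0.
move=> Lo_links Lo_iso; set p := window_start L (size L).
set K := window_start (rcons L o) (size L).+1.
have [po oK] := andP (rcons_link_start Lo_links); have KT := rcons_tail_size Lo_links.
have IH : anick_chain G (size L) (take p (take K T) ++ drop p (take K T)) (drop p (take K T)) L.
  rewrite cat_take_drop.
  exact: IHL (anick_links_take G_long G_reduced Lo_links) (isolated_links_take Lo_iso).
have st : drop p (take K T) ++ drop K T = drop p T by apply: drop_take_cat; lia.
have o_only : occs G (drop p (take K T) ++ drop K T) = [:: (o.1 - p, o.2)].
  by rewrite st (occs_tail Lo_links Lo_iso).
have o_end : (o.1 - p) + o.2 = size (drop p (take K T) ++ drop K T).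
  by rewrite st size_drop -(rcons_link_end Lo_links); lia.
have o_start : o.1 - p < size (drop p (take K T)) by rewrite size_drop size_takel //; lia.
have := anickS IH o_only o_end o_start.
rewrite st take_takel; last by lia.
by rewrite cat_take_drop size_takel ?subnKC -?surjective_pairing ?size_rcons //; lia.
Qed.

Theorem mainTheorem4 (n : nat) (G : pred (seq 'I_n))
  (* relations are monomials of degree >= 2 *)
  (HG2 : forall u, G u -> 1 < size u)
  (* G is a minimal (reduced) set of monomials: no relation divides another *)
  (HGmin : forall u v, G u -> G v -> infix u v -> u = v) :
  (* the numbering by position of the first letter is an Anick numbering *)
  (forall T : seq 'I_n, anick_numbering T (occs G T)) /\
  (* characterization of the basis elements satisfying (I) and (II) *)
  (forall (T : seq 'I_n) (J : seq occ),
     T != [::] -> uniq J -> {subset J <= occs G T} ->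
     (indecomposable T J && condI T J && condII G T J)
     <-> (exists q t L, anick_chain G q T t L /\ perm_eq L J)).
Proof.
split=> [T | T J TnE J_uniq J_occs]; first exact: occs_anick_numbering.
set L := [seq o <- occs G T | o \in J].
have L_uniq : uniq L by exact/filter_uniq/occs_uniq.
have LJ : perm_eq L J.
  apply: uniq_perm => // x; rewrite mem_filter.
  by case xJ: (x \in J) => //=; exact: J_occs.
rewrite -andbA -(perm_conditions G T LJ); split=> [conds | [q [t [L' [chain L'J]]]]].
  have L_occs : {subset L <= occs G T} by move=> x; rewrite mem_filter => /andP[].
  have /(pairwiseP (0,0)) L_sorted := pairwise_filter (mem J) (occs_pairwise HG2 HGmin T).
  have L_incr i : i.+1 < size L -> ostart L i < ostart L i.+1.
    by move=> iL; apply: L_sorted => //; rewrite inE ltnW.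
  have [L_links iso] := conditions_anick_links HG2 HGmin TnE L_uniq L_occs L_incr conds.
  by exists (size L), (drop (window_start L (size L)) T), L; split; first exact: links_anick_chain.
have [_ L'_links iso _] := anick_chain_links chain.
have LL' : perm_eq L L' by rewrite (perm_trans LJ) // perm_sym.
have L'_uniq : uniq L' by rewrite -(perm_uniq LL').
by rewrite (perm_conditions G T LL') anick_links_conditions.
Qed.
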